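(* Let $D$ be a principal ideal domain, $n$ a positive integer, $h_1,\ldots,h_n\in D$, and let $A$ be the $n\times n$ lower triangular Toeplitz matrix whose $(i,j)$ entry is $h_{n-i+j}$ for $i\ge j$ and $0$ for $i<j$. For $1\le c\le n$ let $A_c$ be the $(n-c+1)\times c$ submatrix of $A$ formed by columns $1,\ldots,c$ and rows $c,\ldots,n$. Then for $1\le k\le \frac n2$, the $k$-th Smith normal form entry of $A_c$ is the same (up to units) for all $c$ with $k\le c\le \frac n2$.
   Context: For a $p\times q$ matrix $M$ over a PID with $p\ge q$, its Smith normal form entries $d_1\mid d_2\mid\cdots\mid d_q$ are the diagonal entries of $PMQ$ for invertible $P,Q$ making $PMQ$ diagonal with successive divisibility; they are unique up to units, and $d_k$ is the $k$-th entry. *)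

From HB Require Import structures.
From mathcomp Require Import all_boot all_order all_algebra.
Set Implicit Arguments. Unset Strict Implicit. Unset Printing Implicit Defensive.
Import GRing.Theory.
Local Open Scope ring_scope.

Definition rdvd (D : comPzRingType) (a b : D) : Prop := exists x : D, b = x * a.

Definition associated (D : comUnitRingType) (a b : D) : Prop :=
  exists u : D, u \is a GRing.unit /\ b = u * a.

Definition is_ideal (D : comPzRingType) (I : D -> Prop) : Prop :=
  [/\ I 0, (forall x y, I x -> I y -> I (x + y)) & (forall r x, I x -> I (r * x))].

Definition is_PID (D : idomainType) : Prop :=
  forall I : D -> Prop, is_ideal I -> exists g : D, forall x, I x <-> rdvd g x.

(* d (indexed from 0) is a list of Smith normal form entries of the p x q
   matrix M: P M Q is the rectangular diagonal matrix with entries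
   d 0, ..., d (q-1), with successive divisibility, P, Q invertible. *)
Definition smith_form (D : idomainType) (p q : nat) (M : 'M[D]_(p, q))
    (d : nat -> D) : Prop :=
  exists (P : 'M[D]_p) (Q : 'M[D]_q),
    [/\ P \in unitmx, Q \in unitmx,
        P *m M *m Q = \matrix_(i < p, j < q) (if (i : nat) == j then d i else 0)
      & forall i : nat, (i.+1 < q)%N -> rdvd (d i) (d i.+1)].

(* Entry (i,j) (0-based) of the lower triangular Toeplitz matrix A:
   h_{n-i'+j'} with 1-based i' = i+1, j' = j+1, i.e. h (n - i + j). *)
Definition toep_entry (D : idomainType) (n : nat) (h : nat -> D) (i j : nat) : D :=
  if (j <= i)%N then h (n - i + j)%N else 0.

Definition toepA (D : idomainType) (n : nat) (h : nat -> D) : 'M[D]_n :=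
  \matrix_(i < n, j < n) toep_entry n h i j.

(* A_c : rows c..n and columns 1..c of A (1-based), size (n-c+1) x c. *)
Definition subA (D : idomainType) (n : nat) (h : nat -> D) (c : nat)
    : 'M[D]_(n - c + 1, c) :=
  \matrix_(r < n - c + 1, s < c) toep_entry n h (r + c.-1)%N s.

From HB Require Import structures.
From mathcomp Require Import all_boot all_order all_algebra.
From mathcomp Require Import perm zify.
Set Implicit Arguments. Unset Strict Implicit. Unset Printing Implicit Defensive.
Import GRing.Theory.
Local Open Scope ring_scope.

(* Reading the rows of A_c bottom-up, its k x k minors are the Hankel minors
   det (y (I a + J b)), y i = h (i + 1), with row indices I a <= n - c and
   column indices J b <= c - 1.  Comparing the coefficients of t^L in
   det (M + t N) = det (M + t N)^T, for a Hankel block M and its shift N, equates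
   a sum of minors with L raised rows and a sum of minors with L raised columns.
   A descending induction on the top block of column indices then shows that
   one unit of column range can be traded for one unit of row range without
   changing the ideal generated by the k x k minors, as long as both ranges
   stay at least k.  Hence all A_c with k <= c <= n/2 have the same ideal of
   k x k minors, i.e. associated products d_1 ... d_j for j <= k, and
   cancellation gives the claim for d_k. *)

Section DetExpansions.
Variable R : comPzRingType.

Lemma det_mulmx_expand k p (X : 'M[R]_(k, p)) (Y : 'M[R]_(p, k)) :
  \det (X *m Y) = \sum_(f : {ffun 'I_k -> 'I_p})
     (\prod_i X i (f i)) * \det (\matrix_(i, j) Y (f i) j).
Proof.
rewrite /determinant.
transitivity (\sum_(s : 'S_k) \sum_(f : {ffun 'I_k -> 'I_p})
   (-1) ^+ s * ((\prod_i X i (f i)) * \prod_i Y (f i) (s i))).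
  apply: eq_bigr => s _; rewrite -big_distrr /=; congr (_ * _).
  rewrite (eq_bigr (fun i => \sum_j X i j * Y j (s i))) => [|i _]; last by rewrite mxE.
  by rewrite bigA_distr_bigA /=; apply: eq_bigr => f _; rewrite -big_split.
rewrite exchange_big /=; apply: eq_bigr => f _; rewrite big_distrr /=.
apply: eq_bigr => s _; rewrite mulrCA; congr (_ * (_ * _)).
by apply: eq_bigr => i _; rewrite mxE.
Qed.

Definition row_mix k (A : {set 'I_k}) (M N : 'M[R]_k) : 'M[R]_k :=
  \matrix_(i, j) if i \in A then N i j else M i j.

Definition col_mix k (B : {set 'I_k}) (M N : 'M[R]_k) : 'M[R]_k :=
  \matrix_(i, j) if j \in B then N i j else M i j.

Lemma col_mix_trmx k (B : {set 'I_k}) (M N : 'M[R]_k) :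
  col_mix B M N = (row_mix B M^T N^T)^T.
Proof. by apply/matrixP => i j; rewrite !mxE. Qed.

Lemma det_addmx_scale k (M N : 'M[R]_k) t :
  \det (M + t *: N) = \sum_(A : {set 'I_k}) t ^+ #|A| * \det (row_mix A M N).
Proof.
rewrite /determinant.
transitivity (\sum_(s : 'S_k) \sum_(A : {set 'I_k})
   (-1) ^+ s * (t ^+ #|A| * \prod_i (if i \in A then N i (s i) else M i (s i)))).
  apply: eq_bigr => s _; rewrite -big_distrr /=; congr (_ * _).
  rewrite (eq_bigr (fun i => \sum_(b : bool) if b then t * N i (s i) else M i (s i)));
    last by move=> i _; rewrite !mxE big_bool /= addrC.
  rewrite bigA_distr_bigA /= (reindex (fun A : {set 'I_k} => [ffun i => i \in A])) /=.
    apply: eq_bigr => A _.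
    rewrite (eq_bigr (fun i => (if i \in A then t else 1) *
                               (if i \in A then N i (s i) else M i (s i))));
      last by move=> i _; rewrite ffunE; case: (i \in A); rewrite ?mul1r.
    by rewrite big_split /= -big_mkcond /= prodr_const.
  exists (fun f : {ffun 'I_k -> bool} => [set i | f i]) => [A _|f _].
    by apply/setP => i; rewrite inE ffunE.
  by apply/ffunP => i; rewrite ffunE inE.
rewrite exchange_big /=; apply: eq_bigr => A _; rewrite big_distrr /=.
apply: eq_bigr => s _; rewrite mulrCA; congr (_ * (_ * _)).
by apply: eq_bigr => i _; rewrite mxE.
Qed.

End DetExpansions.

Section MixedMinors.
Variable R : comNzRingType.

Lemma coef_sum_set_powers k (a : {set 'I_k} -> R) L :
  (\sum_(A : {set 'I_k}) 'X ^+ #|A| * (a A)%:P)`_L = \sum_(A : {set 'I_k} | #|A| == L) a A.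
Proof.
rewrite coef_sum [RHS]big_mkcond /=; apply: eq_bigr => A _.
by rewrite mulrC mul_polyC coefZ coefXn eq_sym; case: (_ == _); rewrite ?mulr1 ?mulr0.
Qed.

(* Both sides are the coefficient of t^L in det (M + t N) = det (M + t N)^T. *)
Lemma sum_det_row_mix_col_mix k (M N : 'M[R]_k) L :
  \sum_(A : {set 'I_k} | #|A| == L) \det (row_mix A M N) =
  \sum_(B : {set 'I_k} | #|B| == L) \det (col_mix B M N).
Proof.
have expand (M' N' : 'M[R]_k) :
    \det (map_mx polyC M' + 'X *: map_mx polyC N') =
    \sum_(A : {set 'I_k}) 'X ^+ #|A| * (\det (row_mix A M' N'))%:P.
  rewrite det_addmx_scale; apply: eq_bigr => A _; rewrite -det_map_mx.
  by congr (_ * \det _); apply/matrixP => i j; rewrite !mxE; case: (i \in A).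
have -> : \sum_(B : {set 'I_k} | #|B| == L) \det (col_mix B M N) =
          \sum_(B : {set 'I_k} | #|B| == L) \det (row_mix B M^T N^T).
  by apply: eq_bigr => B _; rewrite col_mix_trmx det_tr.
rewrite -!coef_sum_set_powers -!expand -det_tr; congr (polyseq (\det _))`_L.
by rewrite linearD linearZ /= !map_trmx.
Qed.

End MixedMinors.

Section Divisibility.
Variable R : comPzRingType.
Implicit Types a b c e : R.

Lemma rdvd_refl a : rdvd a a.
Proof. by exists 1; rewrite mul1r. Qed.

Lemma rdvd_trans a b c : rdvd a b -> rdvd b c -> rdvd a c.
Proof. by move=> [u ->] [v ->]; exists (v * u); rewrite mulrA. Qed.

Lemma rdvd0 a : rdvd a 0.
Proof. by exists 0; rewrite mul0r. Qed.

Lemma rdvdD a b c : rdvd a b -> rdvd a c -> rdvd a (b + c).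
Proof. by move=> [u ->] [v ->]; exists (u + v); rewrite mulrDl. Qed.

Lemma rdvdMl a b c : rdvd a b -> rdvd a (c * b).
Proof. by move=> [u ->]; exists (c * u); rewrite mulrA. Qed.

Lemma rdvd_mul a b c e : rdvd a b -> rdvd c e -> rdvd (a * c) (b * e).
Proof. by move=> [u ->] [v ->]; exists (u * v); rewrite mulrACA. Qed.

Lemma rdvd_sum a (I : Type) (r : seq I) (P : pred I) (F : I -> R) :
  (forall i, P i -> rdvd a (F i)) -> rdvd a (\sum_(i <- r | P i) F i).
Proof.
move=> aF; elim/big_rec: _ => [|i x Pi]; [exact: rdvd0 | exact: rdvdD (aF i Pi)].
Qed.

End Divisibility.

Inductive ideal_gen (R : comPzRingType) (S : R -> Prop) : R -> Prop :=
  | ideal_gen0 : ideal_gen S 0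
  | ideal_gen_sub x : S x -> ideal_gen S x
  | ideal_genD x y : ideal_gen S x -> ideal_gen S y -> ideal_gen S (x + y)
  | ideal_genMl r x : ideal_gen S x -> ideal_gen S (r * x).
Arguments ideal_gen0 {R S}.

Section IdealGen.
Variable R : comPzRingType.
Implicit Types S T : R -> Prop.

Lemma ideal_genB S x y : ideal_gen S x -> ideal_gen S y -> ideal_gen S (x - y).
Proof. by move=> Sx Sy; apply: ideal_genD Sx _; rewrite -mulN1r; apply: ideal_genMl. Qed.

Lemma ideal_gen_sum S (I : Type) (r : seq I) (P : pred I) (F : I -> R) :
  (forall i, P i -> ideal_gen S (F i)) -> ideal_gen S (\sum_(i <- r | P i) F i).
Proof.
move=> SF; elim/big_rec: _ => [|i x Pi Sx]; first exact: ideal_gen0.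
exact: ideal_genD (SF i Pi) Sx.
Qed.

Lemma ideal_gen_mono S T :
  (forall x, S x -> ideal_gen T x) -> forall x, ideal_gen S x -> ideal_gen T x.
Proof.
move=> ST x; elim=> [|y /ST //|y z _ Ty _ Tz|r y _ Ty].
- exact: ideal_gen0.
- exact: ideal_genD Ty Tz.
- exact: ideal_genMl.
Qed.

Lemma eq_ideal_gen (S T : R -> Prop) x :
  (forall z, S z <-> T z) -> ideal_gen S x <-> ideal_gen T x.
Proof.
by move=> ST; split; apply: ideal_gen_mono => z /ST; apply: ideal_gen_sub.
Qed.

Lemma rdvd_ideal_gen S a x :
  (forall y, S y -> rdvd a y) -> ideal_gen S x -> rdvd a x.
Proof.
move=> Sa; elim=> [|y /Sa //|y z _ ay _ az|r y _ ay].
- exact: rdvd0.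
- exact: rdvdD.
- exact: rdvdMl.
Qed.

End IdealGen.

Section OntoSums.
Variables (T : finType) (P : {pred T}) (s : seq nat).
Hypotheses (s_uniq : uniq s) (card_P : (#|P| <= size s)%N).

Lemma sum_onto (F : T -> nat) :
  {in P &, injective F} -> {subset s <= [seq F b | b in P]} ->
  (\sum_(b in P) F b)%N = sumn s.
Proof.
move=> Finj sF; have [|_ eq_sF] := uniq_min_size s_uniq sF; first by rewrite size_image.
have perm_sF : perm_eq s [seq F b | b in P].
  apply: uniq_perm eq_sF => //.
  by rewrite map_inj_in_uniq ?enum_uniq // => a b; rewrite !mem_enum; apply: Finj.
by rewrite sumnE (perm_big _ perm_sF) big_image.
Qed.

Lemma onto_leq_eq (F G : T -> nat) :
  {in P &, injective F} -> {subset s <= [seq F b | b in P]} ->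
  {in P &, injective G} -> {subset s <= [seq G b | b in P]} ->
  {in P, forall b, G b <= F b}%N -> {in P, G =1 F}.
Proof.
move=> Finj sF Ginj sG GF.
have /leqif_sum[_] : forall b, b \in P -> (G b <= F b ?= iff (G b == F b))%N.
  by move=> b Pb; apply/leqif_eq/GF.
rewrite (sum_onto Finj sF) (sum_onto Ginj sG) eqxx => /esym/forallP GeqF b Pb.
by apply/eqP; apply: implyP (GeqF b) Pb.
Qed.

End OntoSums.

Section HankelMinors.
Variables (R : comNzRingType) (y : nat -> R) (k : nat).
Implicit Types (I J : 'I_k -> nat) (A B : {set 'I_k}).

Definition hankel_minor I J : R := \det (\matrix_(a, b) y (I a + J b)).

Definition is_hankel_minor (r c : nat) (x : R) : Prop :=
  exists I J, [/\ forall a, (I a <= r)%N, forall b, (J b <= c)%N & x = hankel_minor I J].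

Lemma hankel_minorC I J : hankel_minor I J = hankel_minor J I.
Proof.
by rewrite /hankel_minor -det_tr; congr (\det _); apply/matrixP => a b; rewrite !mxE addnC.
Qed.

Lemma is_hankel_minorC r c x : is_hankel_minor r c x -> is_hankel_minor c r x.
Proof. by case=> I [J [Ir Jc ->]]; exists J, I; rewrite hankel_minorC. Qed.

Lemma hankel_minor_noninj I J : ~~ injectiveb J -> hankel_minor I J = 0.
Proof.
case/injectivePn => b1 [b2 neq_b eqJ]; rewrite /hankel_minor -det_tr.
by apply: (determinant_alternate neq_b) => a; rewrite !mxE eqJ.
Qed.

(* In a Hankel array raising a row index and raising a column index have the
   same effect. *)
Lemma hankel_minor_shift_sum I J (L : nat) :
  \sum_(A : {set 'I_k} | #|A| == L) hankel_minor (fun a => I a + (a \in A))%N J =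
  \sum_(B : {set 'I_k} | #|B| == L) hankel_minor I (fun b => J b + (b \in B))%N.
Proof.
have := sum_det_row_mix_col_mix (\matrix_(a, b) y (I a + J b))
  (\matrix_(a, b) y (I a + J b).+1) L.
congr (_ = _); apply: eq_bigr => A _; congr (\det _); apply/matrixP => a b; rewrite !mxE.
  by case: (a \in A); rewrite /= (addn0, addn1) ?addSn.
by case: (b \in A); rewrite /= (addn0, addn1) ?addnS.
Qed.

Lemma hankel_minor_raised_cols I J B0 :
  hankel_minor I (fun b => J b + (b \in B0))%N =
    \sum_(A : {set 'I_k} | #|A| == #|B0|) hankel_minor (fun a => I a + (a \in A))%N J
  - \sum_(B : {set 'I_k} | (#|B| == #|B0|) && (B != B0))
      hankel_minor I (fun b => J b + (b \in B))%N.
Proof. by rewrite hankel_minor_shift_sum (bigD1 B0) //= addrK. Qed.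

Definition covers (m c : nat) J : bool := all (mem (codom J)) (index_iota m c.+1).

Lemma coversP m c J :
  reflect (forall x, (m <= x <= c)%N -> exists b, J b = x) (covers m c J).
Proof.
apply: (iffP allP) => [cov x mxc | cov x]; last first.
  by rewrite mem_index_iota ltnS => /cov[b <-]; apply: codom_f.
have /codomP[b ->] : x \in codom J by apply: cov; rewrite mem_index_iota ltnS.
by exists b.
Qed.

Lemma lowered_block_cover m c J B0 B :
  injective J -> (forall b, J b <= c)%N -> (forall b, J b != m) ->
  (forall b, (b \in B0) = (m < J b))%N -> covers m.+1 c J ->
  #|B| = #|B0| -> injective (fun b => J b - (b \in B0) + (b \in B))%N ->
  covers m.+1 c (fun b => J b - (b \in B0) + (b \in B))%N -> B = B0.
Proof.
move=> Jinj Jc Jm B0J /coversP Jcov cardB; set J' := fun b => _.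
move=> J'inj /coversP J'cov; set s := index_iota m.+1 c.+1.
have s_uniq : uniq s := iota_uniq _ _.
have J_onto : {subset s <= [seq J b | b in B0]}.
  move=> x; rewrite mem_index_iota ltnS => mxc; have [b Jb] := Jcov x mxc.
  by rewrite -Jb; apply: image_f; rewrite B0J Jb; lia.
have cardB0 : (#|B0| <= size s)%N.
  rewrite -(size_image J); apply: uniq_leq_size.
    by rewrite map_inj_uniq ?enum_uniq.
  move=> x /imageP[b]; rewrite B0J => mJ ->; rewrite mem_index_iota; have := Jc b; lia.
have J'_onto : {subset s <= [seq J' b | b in B0]}.
  move=> x; rewrite mem_index_iota ltnS => mxc; have [b J'b] := J'cov x mxc.
  rewrite -J'b; apply: image_f; rewrite B0J; move: J'b mxc; rewrite /J' B0J.
  by have := Jm b; case: (ltnP m (J b)) => //= Jbm /eqP; case: (b \in B) => /=; lia.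
have J'J : {in B0, J' =1 J}.
  apply: (onto_leq_eq s_uniq cardB0 (F := J) (G := J')) => //.
  - by move=> b1 b2 _ _ /Jinj.
  - by move=> b1 b2 _ _ /J'inj.
  by move=> b B0b; rewrite /J' B0b; move: B0b; rewrite B0J; case: (b \in B) => /=; lia.
apply/esym/eqP; rewrite eqEcard cardB leqnn andbT; apply/subsetP => b B0b.
have := J'J b B0b; rewrite /J' B0b; move: B0b; rewrite B0J.
by case: (b \in B) => //=; lia.
Qed.

Section Span.
Variables (r c : nat) (I : 'I_k -> nat).
Hypothesis I_le : forall a, (I a <= r)%N.

Let in_span J := ideal_gen (is_hankel_minor r.+1 c.-1) (hankel_minor I J).

Lemma hankel_span_step m : (m <= c)%N ->
  (forall J, (forall b, J b <= c)%N -> ~~ covers m.+1 c J -> in_span J) ->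
  forall J, (forall b, J b <= c)%N -> ~~ covers m c J -> in_span J.
Proof.
move=> mc IH J Jc Jm; rewrite /in_span.
have [Jm1|] := boolP (covers m.+1 c J); last exact: IH.
have [/injectiveP Jinj|/hankel_minor_noninj ->] := boolP (injectiveb J);
  last exact: ideal_gen0.
have Jneq b : J b != m.
  apply: contraNneq Jm => Jbm; apply/coversP => x /andP[mx xc].
  by case: (ltngtP m x) mx => // [mx _|<-]; [apply/(coversP _ _ _ Jm1); lia | exists b].
pose B0 := [set b | m < J b]%N; pose J0 b := (J b - (b \in B0))%N.
have B0J b : (b \in B0) = (m < J b)%N by rewrite inE.
have J0c b : (J0 b < c)%N.
  by rewrite /J0 B0J; have := Jc b; have := Jneq b; case: ltnP => /=; lia.
have -> : hankel_minor I J = hankel_minor I (fun b => J0 b + (b \in B0))%N.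
  congr (\det _); apply/matrixP => a b; rewrite !mxE /J0 B0J.
  by case: ltnP => mJ; congr (y _); lia.
rewrite hankel_minor_raised_cols; apply: ideal_genB; apply: ideal_gen_sum.
  move=> A _; apply: ideal_gen_sub; exists (fun a => I a + (a \in A))%N, J0.
  split=> // [a|b]; last by have := J0c b; lia.
  by have := I_le a; case: (a \in A) => /=; lia.
move=> B /andP[/eqP cardB neqB]; set J' := fun b => _.
have [/injectiveP J'inj|/hankel_minor_noninj ->] := boolP (injectiveb J');
  last exact: ideal_gen0.
apply: IH => [b|]; first by rewrite /J'; have := J0c b; case: (b \in B) => /=; lia.
apply: contra neqB => J'cov; apply/eqP.
exact: (lowered_block_cover Jinj Jc Jneq B0J Jm1 cardB J'inj J'cov).
Qed.

Lemma hankel_minor_in_span J : (k <= c)%N -> (forall b, J b <= c)%N -> in_span J.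
Proof.
move=> kc Jc; have uncovered d m : (m + d)%N = c.+1 ->
    forall J, (forall b, J b <= c)%N -> ~~ covers m c J -> in_span J.
  elim: d m => [m|d IHd m mdc].
    by rewrite addn0 => -> J' _; rewrite /covers /index_iota subnn.
  by apply: hankel_span_step; [lia | apply: IHd; rewrite addSnnS].
apply: (uncovered c.+1 0%N) => //; apply/negP => /coversP cov.
have : (size (index_iota 0 c.+1) <= size (codom J))%N.
  apply: uniq_leq_size; first exact: iota_uniq.
  move=> x; rewrite mem_index_iota ltnS => /(cov x)[b <-]; exact: codom_f.
by rewrite size_iota size_codom card_ord; lia.
Qed.

End Span.

Lemma hankel_span_shift r c x : (k <= c.+1)%N -> (k <= r.+1)%N ->
  ideal_gen (is_hankel_minor r c.+1) x <-> ideal_gen (is_hankel_minor r.+1 c) x.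
Proof.
move=> kc kr; split; apply: ideal_gen_mono => _ [I [J [Ir Jc ->]]].
  exact: (hankel_minor_in_span Ir kc Jc).
rewrite hankel_minorC; apply: ideal_gen_mono (hankel_minor_in_span Jc kr Ir).
by move=> z /is_hankel_minorC; apply: ideal_gen_sub.
Qed.

End HankelMinors.

Section Minors.
Variable R : comPzRingType.

Definition is_minor k p q (M : 'M[R]_(p, q)) (x : R) : Prop :=
  exists (f : 'I_k -> 'I_p) (g : 'I_k -> 'I_q), x = \det (\matrix_(a, b) M (f a) (g b)).

Lemma is_minor_trmx k p q (M : 'M[R]_(p, q)) x : is_minor k M^T x -> is_minor k M x.
Proof.
case=> f [g ->]; exists g, f; rewrite -det_tr; congr (\det _).
by apply/matrixP => a b; rewrite !mxE.
Qed.

Lemma is_minor_mulmxl k p q r (X : 'M[R]_(r, p)) (M : 'M[R]_(p, q)) x :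
  is_minor k (X *m M) x -> ideal_gen (is_minor k M) x.
Proof.
case=> f [g ->].
have -> : \matrix_(a, b) (X *m M) (f a) (g b) =
          \matrix_(a, j) X (f a) j *m \matrix_(j, b) M j (g b).
  by apply/matrixP => a b; rewrite !mxE; apply: eq_bigr => j _; rewrite !mxE.
rewrite det_mulmx_expand; apply: ideal_gen_sum => F _; apply/ideal_genMl/ideal_gen_sub.
by exists (fun a => F a), g; congr (\det _); apply/matrixP => a b; rewrite !mxE.
Qed.

Lemma is_minor_mulmxr k p q r (M : 'M[R]_(p, q)) (Y : 'M[R]_(q, r)) x :
  is_minor k (M *m Y) x -> ideal_gen (is_minor k M) x.
Proof.
rewrite -[M *m Y]trmxK trmx_mul => /is_minor_trmx/is_minor_mulmxl.
by apply: ideal_gen_mono => z /is_minor_trmx; apply: ideal_gen_sub.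
Qed.

Lemma ideal_gen_minor_mulmx k p q p' q' (X : 'M[R]_(p', p)) (M : 'M[R]_(p, q))
    (Y : 'M[R]_(q, q')) x :
  ideal_gen (is_minor k (X *m M *m Y)) x -> ideal_gen (is_minor k M) x.
Proof.
apply: ideal_gen_mono => z /is_minor_mulmxr; apply: ideal_gen_mono => w.
exact: is_minor_mulmxl.
Qed.

End Minors.

Section DivisorChain.
Variables (R : comPzRingType) (q : nat) (d : nat -> R).
Hypothesis d_chain : forall i, (i.+1 < q)%N -> rdvd (d i) (d i.+1).

Lemma rdvd_chain i j : (i <= j)%N -> (j < q)%N -> rdvd (d i) (d j).
Proof.
elim: j => [|j IH] ij jq; first by move: ij; rewrite leqn0 => /eqP ->; apply: rdvd_refl.
have [ij1|->] : (i <= j)%N \/ i = j.+1 by lia.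
  by apply: rdvd_trans (IH ij1 _) (d_chain _); lia.
exact: rdvd_refl.
Qed.

Lemma rdvd_prod_prefix (s : seq nat) : uniq s -> all (fun i => i < q)%N s ->
  rdvd (\prod_(i < size s) d i) (\prod_(i <- s) d i).
Proof.
move=> s_uniq s_q; have [n sz_s] : exists n, size s = n by exists (size s).
rewrite sz_s; elim: n s sz_s s_uniq s_q => [|n IH] s sz_s s_uniq s_q.
  by rewrite big_ord0; exists (\prod_(i <- s) d i); rewrite mulr1.
have [x xs nx] : exists2 x, x \in s & (n <= x)%N.
  apply/hasP; apply: contraT => /hasPn small.
  have : (size s <= size (iota 0 n))%N.
    by apply: uniq_leq_size => // z zs; rewrite mem_iota /=; have := small z zs; lia.
  by rewrite size_iota sz_s; lia.
rewrite (perm_big _ (perm_to_rem xs)) big_cons big_ord_recr /= mulrC.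
apply: rdvd_mul; first by apply: rdvd_chain nx _; apply: (allP s_q).
apply: IH; [by rewrite size_rem // sz_s | exact: rem_uniq |].
by apply/allP => z /mem_rem; apply: (allP s_q).
Qed.

End DivisorChain.

Section SmithMinors.
Variable D : idomainType.

Definition smith_diag p q (d : nat -> D) : 'M[D]_(p, q) :=
  \matrix_(i < p, j < q) (if (i : nat) == j then d i else 0).

Lemma smith_diag_minor_rdvd p q (d : nat -> D) k x :
  (forall i, (i.+1 < q)%N -> rdvd (d i) (d i.+1)) ->
  is_minor k (smith_diag p q d) x -> rdvd (\prod_(i < k) d i) x.
Proof.
move=> d_chain [f [g ->]].
have [/injectiveP f_inj|] := boolP (injectiveb f); last first.
  case/injectivePn=> a1 [a2 neq_a eq_f]; rewrite (determinant_alternate neq_a).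
    exact: rdvd0.
  by move=> b; rewrite !mxE eq_f.
rewrite /determinant; apply: rdvd_sum => s _; apply: rdvdMl.
have [/forallP fgs|] := boolP [forall a, (f a : nat) == g (s a)]; last first.
  rewrite negb_forall => /existsP[a neq_fg].
  by rewrite [X in rdvd _ X](bigD1 a) //= !mxE (negPf neq_fg) mul0r; apply: rdvd0.
rewrite [X in rdvd _ X](eq_bigr (fun a => d (f a))) => [|a _]; last by rewrite !mxE fgs.
set fs := [seq (f a : nat) | a <- enum 'I_k].
have -> : \prod_a d (f a) = \prod_(i <- fs) d i by rewrite big_map big_enum.
have fs_uniq : uniq fs.
  by rewrite map_inj_uniq ?enum_uniq // => a1 a2 /val_inj/f_inj.
have fs_q : all (fun i => i < q)%N fs.
  by apply/allP => _ /mapP[a _ ->]; rewrite (eqP (fgs a)).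
by have := rdvd_prod_prefix d_chain fs_uniq fs_q; rewrite size_map size_enum_ord.
Qed.

Lemma smith_diag_prefix_minor p q (d : nat -> D) k : (k <= q)%N -> (q <= p)%N ->
  is_minor k (smith_diag p q d) (\prod_(i < k) d i).
Proof.
move=> kq qp; have kp : (k <= p)%N by apply: leq_trans qp.
exists (widen_ord kp), (widen_ord kq).
have -> : \matrix_(a, b) smith_diag p q d (widen_ord kp a) (widen_ord kq b) =
          diag_mx (\row_(i < k) d i).
  apply/matrixP => a b; rewrite !mxE /=.
  by case: (eqVneq a b) => [->|neq_ab]; rewrite ?eqxx ?mulr1n // ifN ?mulr0n.
by rewrite det_diag; apply: eq_bigr => i _; rewrite mxE.
Qed.

Lemma smith_minor_ideal p q (M : 'M[D]_(p, q)) d k :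
  (k <= q)%N -> (q <= p)%N -> smith_form M d ->
  (forall x, ideal_gen (is_minor k M) x -> rdvd (\prod_(i < k) d i) x) /\
  ideal_gen (is_minor k M) (\prod_(i < k) d i).
Proof.
move=> kq qp [P [Q [P_unit Q_unit PMQ d_chain]]].
have -> : M = invmx P *m smith_diag p q d *m invmx Q.
  by rewrite /smith_diag -PMQ !mulmxA mulVmx // mul1mx mulmxK.
split=> [x /ideal_gen_minor_mulmx|].
  by apply: rdvd_ideal_gen => z; apply: smith_diag_minor_rdvd.
apply: (ideal_gen_minor_mulmx (X := P) (Y := Q)).
rewrite !mulmxA mulmxV // mul1mx mulmxKV //.
exact/ideal_gen_sub/smith_diag_prefix_minor.
Qed.

End SmithMinors.

Section Associates.
Variable D : idomainType.

Lemma associated_rdvd (a b : D) : rdvd a b -> rdvd b a -> associated a b.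
Proof.
move=> [u b_ua] [v a_vb]; have [a_0|a0] := eqVneq a 0.
  by exists 1; split; [exact: unitr1 | rewrite b_ua a_0 !mulr0].
exists u; split=> //; apply/unitrPr; exists v; apply: (mulIf a0).
by rewrite mul1r mulrAC -b_ua mulrC -a_vb.
Qed.

Lemma associated_mulIl (a b a' b' : D) : a != 0 ->
  associated a a' -> associated (a * b) (a' * b') -> associated b b'.
Proof.
move=> a0 [u [u_unit ->]] [v [v_unit e]].
have /(mulfI a0) ub'_vb : a * (u * b') = a * (v * b).
  by rewrite mulrA (mulrC a) e mulrCA.
exists (u^-1 * v); rewrite unitrM unitrV u_unit v_unit -mulrA -ub'_vb.
by rewrite mulKr.
Qed.

End Associates.

Lemma smith_prod_eq0 (D : idomainType) p q (M : 'M[D]_(p, q)) d j :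
  smith_form M d -> (j < q)%N -> \prod_(i < j) d i = 0 -> d j = 0.
Proof.
case=> _ [_ [_ _ _ d_chain]] jq /eqP /prodf_eq0[i _ /eqP di0].
by have [u ->] := rdvd_chain d_chain (ltnW (ltn_ord i)) jq; rewrite di0 mulr0.
Qed.

Lemma smith_prod_rdvd (D : idomainType) p q p' q' (M : 'M[D]_(p, q)) (M' : 'M[D]_(p', q'))
    d d' k :
  (k <= q <= p)%N -> (k <= q' <= p')%N -> smith_form M d -> smith_form M' d' ->
  (forall x, ideal_gen (is_minor k M) x -> ideal_gen (is_minor k M') x) ->
  rdvd (\prod_(i < k) d' i) (\prod_(i < k) d i).
Proof.
move=> /andP[kq qp] /andP[kq' qp'] S S' MM'.
have [_ gen_d] := smith_minor_ideal kq qp S.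
have [dvd_d' _] := smith_minor_ideal kq' qp' S'.
exact/dvd_d'/MM'.
Qed.

Lemma smith_entry_associated (D : idomainType) p q p' q' (M : 'M[D]_(p, q))
    (M' : 'M[D]_(p', q')) d d' k :
  smith_form M d -> smith_form M' d' -> (k < q)%N -> (k < q')%N ->
  associated (\prod_(i < k) d i) (\prod_(i < k) d' i) ->
  associated (\prod_(i < k.+1) d i) (\prod_(i < k.+1) d' i) ->
  associated (d k) (d' k).
Proof.
move=> S S' kq kq' assoc_k; rewrite !big_ord_recr /=.
have [d_0|d_n0] := eqVneq (\prod_(i < k) d i) 0; last exact: associated_mulIl.
have [u [_ d'_0]] := assoc_k; rewrite d_0 mulr0 in d'_0.
rewrite (smith_prod_eq0 S kq d_0) (smith_prod_eq0 S' kq' d'_0) => _.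
by exists 1; rewrite unitr1 mulr0.
Qed.

Section ToeplitzBlocks.
Variables (D : idomainType) (n : nat) (h : nat -> D).

Lemma is_minor_subA k c x : (0 < c)%N -> (c <= n)%N ->
  is_minor k (subA n h c) x <-> is_hankel_minor (fun i => h i.+1) k (n - c) c.-1 x.
Proof.
move=> c0 cn; split=> [[f [g ->]]|[I [J [Ir Jc ->]]]].
  exists (fun a => n - c - f a)%N, (fun b => nat_of_ord (g b)); split=> [a|b|].
  - by lia.
  - by have := ltn_ord (g b); lia.
  congr (\det _); apply/matrixP => a b; rewrite !mxE /toep_entry.
  have := ltn_ord (f a); have := ltn_ord (g b) => gb fa.
  by rewrite ifT; [congr h | ]; lia.
have I_lt a : (n - c - I a < n - c + 1)%N by lia.
have J_lt b : (J b < c)%N by have := Jc b; lia.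
exists (fun a => Ordinal (I_lt a)), (fun b => Ordinal (J_lt b)).
congr (\det _); apply/matrixP => a b; rewrite !mxE /toep_entry /=.
have := Ir a; have := Jc b => Jb Ia.
by rewrite ifT; [congr h | ]; lia.
Qed.

Lemma subA_minor_ideal_succ k c x : (0 < c)%N -> (k <= c)%N -> (c.+1.*2 <= n)%N ->
  ideal_gen (is_minor k (subA n h c)) x <-> ideal_gen (is_minor k (subA n h c.+1)) x.
Proof.
case: c => // c _ kc cn.
have cn1 : (c.+1 <= n)%N by lia.
have cn2 : (c.+2 <= n)%N by lia.
rewrite (eq_ideal_gen _ (fun z => is_minor_subA k z (ltn0Sn _) cn1)).
rewrite (eq_ideal_gen _ (fun z => is_minor_subA k z (ltn0Sn _) cn2)).
have -> : (n - c.+1 = (n - c.+2).+1)%N by lia.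
by symmetry; apply: hankel_span_shift; lia.
Qed.

Lemma subA_minor_ideal_eq k c c' x : (0 < c)%N -> (0 < c')%N ->
  (k <= c)%N -> (k <= c')%N -> (c.*2 <= n)%N -> (c'.*2 <= n)%N ->
  ideal_gen (is_minor k (subA n h c)) x <-> ideal_gen (is_minor k (subA n h c')) x.
Proof.
wlog le_cc' : c c' / (c <= c')%N.
  move=> hyp c0 c'0 kc kc' cn c'n.
  by case/orP: (leq_total c c') => ?; [|symmetry]; apply: hyp.
move=> c0 _ kc _ _; have [e ->] : exists e, c' = (e + c)%N by exists (c' - c)%N; lia.
elim: e => [//|e IH] cen; rewrite IH; last by lia.
apply: subA_minor_ideal_succ; lia.
Qed.

Lemma subA_smith_prod_associated c c' d d' j : (0 < c)%N -> (0 < c')%N ->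
  (j <= c)%N -> (j <= c')%N ->
  (c.*2 <= n)%N -> (c'.*2 <= n)%N ->
  smith_form (subA n h c) d -> smith_form (subA n h c') d' ->
  associated (\prod_(i < j) d i) (\prod_(i < j) d' i).
Proof.
move=> c0 c'0 jc jc' cn c'n S S'.
have jcn : (j <= c <= n - c + 1)%N by apply/andP; split; lia.
have jcn' : (j <= c' <= n - c' + 1)%N by apply/andP; split; lia.
apply: associated_rdvd.
  apply: (smith_prod_rdvd jcn' jcn S' S) => x.
  by rewrite (@subA_minor_ideal_eq j c' c x) //; lia.
apply: (smith_prod_rdvd jcn jcn' S S') => x.
by rewrite (@subA_minor_ideal_eq j c c' x) //; lia.
Qed.

End ToeplitzBlocks.

Theorem lemma2 (D : idomainType) (hPID : is_PID D) (n : nat) (h : nat -> D)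
    (k c c' : nat) (d d' : nat -> D) :
  (0 < n)%N -> (1 <= k)%N ->
  (k <= c)%N -> (c.*2 <= n)%N ->
  (k <= c')%N -> (c'.*2 <= n)%N ->
  smith_form (subA n h c) d -> smith_form (subA n h c') d' ->
  associated (d k.-1) (d' k.-1).
Proof.
move=> _ k1 kc cn kc' c'n S S'.
have prod_assoc j : (j <= k)%N -> associated (\prod_(i < j) d i) (\prod_(i < j) d' i).
  by move=> jk; apply: subA_smith_prod_associated S S'; lia.
case: k k1 kc kc' prod_assoc => // k _ kc kc' prod_assoc.
by apply: (smith_entry_associated S S'); [lia | lia | apply: prod_assoc ..].
Qed.
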